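(* Let $G$ be a connected weighted undirected graph on the vertex set $\{1,\dots,n\}$ with symmetric weighted adjacency matrix $W=(w_{ij})$ (where $w_{ij}>0$ is the weight of edge $(i,j)$ if $i\sim j$ and $w_{ij}=0$ otherwise), degree matrix $D=\operatorname{Diag}(W\mathbf 1)$ with diagonal entries $d_i$, and Laplacian $L=D-W$. Consider the matrices (i) $K^{\mathrm{absorp}}(t)=[tA+L]^{-1}$, where $t>0$ and $A=\operatorname{Diag}(a_1,\dots,a_n)$ with all $a_i>0$; (ii) $K^{\mathrm{PPR}}(\alpha)=[I-\alpha P]^{-1}$, where $P=D^{-1}W$ and $0<\alpha<1$; (iii) $K^{\mathrm{modifPPR}}(\alpha)=[D-\alpha W]^{-1}$, where $0<\alpha<1$. Then each of these matrices $S=(s_{ij})$ produces a transitional measure on $G$.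
   Context: A matrix $S=(s_{ij})$ indexed by the vertices of $G$ produces a transitional measure on $G$ if for all vertices $i,j,k$ one has $s_{ij}\,s_{jk}\le s_{ik}\,s_{jj}$, and moreover $s_{ij}\,s_{jk}=s_{ik}\,s_{jj}$ holds if and only if every path in $G$ from $i$ to $k$ visits $j$. *)

From HB Require Import structures.
From mathcomp Require Import all_boot all_order all_algebra.
Set Implicit Arguments. Unset Strict Implicit. Unset Printing Implicit Defensive.
Import Order.TTheory GRing.Theory Num.Theory.
Local Open Scope ring_scope.

Definition weighted_graph (R : realFieldType) (n : nat) (W : 'M[R]_n) : Prop :=
  (forall i j, W i j = W j i) /\ (forall i j, 0 <= W i j) /\ (forall i, W i i = 0).

Definition adj (R : realFieldType) (n : nat) (W : 'M[R]_n) : rel 'I_n :=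
  fun i j => 0 < W i j.

Definition connected_graph (R : realFieldType) (n : nat) (W : 'M[R]_n) : Prop :=
  forall i j : 'I_n, connect (adj W) i j.

Definition degmx (R : realFieldType) (n : nat) (W : 'M[R]_n) : 'M[R]_n :=
  diag_mx (\row_i \sum_j W i j).

Definition laplacian (R : realFieldType) (n : nat) (W : 'M[R]_n) : 'M[R]_n :=
  degmx W - W.

Definition every_path_visits (R : realFieldType) (n : nat) (W : 'M[R]_n)
  (i j k : 'I_n) : Prop :=
  forall p : seq 'I_n, path (adj W) i p -> last i p = k -> j \in i :: p.

Definition transitional_measure (R : realFieldType) (n : nat) (W : 'M[R]_n)
  (S : 'M[R]_n) : Prop :=
  forall i j k : 'I_n,
    S i j * S j k <= S i k * S j j /\
    (S i j * S j k = S i k * S j j <-> every_path_visits W i j k).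

Definition K_absorp (R : realFieldType) (n : nat) (W : 'M[R]_n)
  (a : 'I_n -> R) (t : R) : 'M[R]_n :=
  invmx (t *: diag_mx (\row_i a i) + laplacian W).

Definition K_PPR (R : realFieldType) (n : nat) (W : 'M[R]_n) (alpha : R) : 'M[R]_n :=
  invmx (1%:M - alpha *: (invmx (degmx W) *m W)).

Definition K_modifPPR (R : realFieldType) (n : nat) (W : 'M[R]_n) (alpha : R) : 'M[R]_n :=
  invmx (degmx W - alpha *: W).

From mathcomp Require Import all_boot all_order all_algebra.
From mathcomp Require Import ring lra.
Set Implicit Arguments. Unset Strict Implicit. Unset Printing Implicit Defensive.
Import Order.TTheory GRing.Theory Num.Theory.
Local Open Scope ring_scope.

(* Each of the three kernels is, up to a positive rescaling of its columns,
   the inverse S of a matrix M with nonpositive off-diagonal entries, positive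
   column sums, and M_ml < 0 exactly when m ~ l.  Such an M obeys a minimum
   principle: a row vector g with (gM)_l >= 0 wherever g_l < 0 is nonnegative.
   For fixed i, j the row vector g = S_jj S_i. - S_ij S_j. satisfies
   gM = S_jj e_i - S_ij e_j and g_j = 0, so g >= 0, which is the inequality.
   Where g vanishes off {i, j}, it vanishes at every neighbour, and g_i > 0,
   so g_k > 0 whenever k is reachable from i avoiding j.  Conversely g is zero
   off that reachable set, by the minimum principle applied to -g with g
   truncated to zero on the set. *)

Section ZMatrix.
Variables (R : realFieldType) (n : nat) (M : 'M[R]_n).
Hypothesis M_offdiag_le0 : forall m l, m != l -> M m l <= 0.
Hypothesis M_colsum_gt0 : forall l, 0 < \sum_m M m l.

(* At a minimiser l0 of g, (gM)_l0 is at most g l0 times the column sum. *)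
Lemma Zmx_min_principle (g : 'I_n -> R) :
  (forall l, g l < 0 -> 0 <= \sum_m g m * M m l) -> forall l, 0 <= g l.
Proof.
move=> gM_ge0 l; have [l0 _ g_min] := @arg_minP _ R _ l xpredT g isT.
rewrite leNgt; apply/negP => gl_lt0.
have gl0_lt0 : g l0 < 0 by apply: le_lt_trans (g_min l isT) gl_lt0.
have gM_le : \sum_m g m * M m l0 <= g l0 * \sum_m M m l0.
  rewrite mulr_sumr; apply: ler_sum => m _; case: (eqVneq m l0) => [-> //|ml0].
  by apply: ler_wnM2r; [exact: M_offdiag_le0 | exact: g_min].
have := gM_ge0 _ gl0_lt0; have := M_colsum_gt0 l0; nra.
Qed.

Lemma Zmx_diag_gt0 l : 0 < M l l.
Proof.
have := M_colsum_gt0 l; rewrite (bigD1 l) //=.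
have : \sum_(m | m != l) M m l <= 0 by apply: sumr_le0 => m; exact: M_offdiag_le0.
lra.
Qed.

Lemma Zmx_unitmx : M \in unitmx.
Proof.
rewrite unitmxE unitfE; apply/negP => /det0P [v v_neq0 vM].
have vM0 l : \sum_m v 0 m * M m l = 0.
  by have := congr1 (fun A : 'rV_n => A 0 l) vM; rewrite !mxE.
have v_ge0 : forall l, 0 <= v 0 l by apply: Zmx_min_principle => l _; rewrite vM0.
have v_le0 : forall l, 0 <= - v 0 l.
  apply: Zmx_min_principle => l _.
  by under eq_bigr do rewrite mulNr; rewrite sumrN vM0 oppr0.
move/eqP: v_neq0; apply; apply/matrixP => i l; rewrite mxE (ord1 i).
by have := v_ge0 l; have := v_le0 l; lra.
Qed.

Let S := invmx M.

Lemma Zmx_mulVmxE i l : \sum_m S i m * M m l = (i == l)%:R.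
Proof.
by have := congr1 (fun A : 'M_n => A i l) (mulVmx Zmx_unitmx); rewrite !mxE.
Qed.

Lemma Zmx_invmx_ge0 i m : 0 <= S i m.
Proof. by apply: Zmx_min_principle => l _; rewrite Zmx_mulVmxE ler0n. Qed.

Lemma Zmx_invmx_diag_gt0 j : 0 < S j j.
Proof.
have := Zmx_mulVmxE j j; rewrite eqxx (bigD1 j) //=.
have : \sum_(m | m != j) S j m * M m j <= 0.
  apply: sumr_le0 => m mj.
  by apply: mulr_ge0_le0; [exact: Zmx_invmx_ge0 | exact: M_offdiag_le0].
have := Zmx_diag_gt0 j; have := Zmx_invmx_ge0 j j; nra.
Qed.

Variable W : 'M[R]_n.
Hypothesis M_offdiag_lt0 : forall m l, m != l -> (M m l < 0) = adj W m l.

Section Gap.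
Variables i j : 'I_n.

Let gap m := S j j * S i m - S i j * S j m.
Let avoid_j := [rel x y | adj W x y && (y != j)].

Lemma gap_mul l : \sum_m gap m * M m l = S j j * (i == l)%:R - S i j * (j == l)%:R.
Proof.
under eq_bigr do rewrite mulrBl -!mulrA.
by rewrite sumrB -!mulr_sumr !Zmx_mulVmxE.
Qed.

Lemma gap_pivot : gap j = 0.
Proof. by rewrite /gap mulrC subrr. Qed.

Lemma gap_ge0 l : 0 <= gap l.
Proof.
apply: Zmx_min_principle => l' gl'_lt0; rewrite gap_mul.
have [jl'|_] := eqVneq j l'; first by rewrite -jl' gap_pivot ltxx in gl'_lt0.
rewrite mulr0 subr0.
by apply: mulr_ge0; [exact: ltW (Zmx_invmx_diag_gt0 j) | exact: ler0n].
Qed.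

(* (gap M)_y = 0 is a sum of nonpositive terms gap x * M x y, x != y. *)
Lemma gap_eq0_neighbour x y :
  gap y = 0 -> y != i -> y != j -> adj W x y -> gap x = 0.
Proof.
move=> gy_eq0 yi yj xy; have [-> //|x_neq_y] := eqVneq x y.
have terms_ge0 m : xpredT m -> 0 <= - (gap m * M m y).
  move=> _; rewrite oppr_ge0; have [-> |my] := eqVneq m y; first by rewrite gy_eq0 mul0r.
  by apply: mulr_ge0_le0; [exact: gap_ge0 | exact: M_offdiag_le0].
have sum_eq0 : \sum_m - (gap m * M m y) = 0.
  by rewrite sumrN gap_mul !(eq_sym _ y) (negPf yi) (negPf yj) !mulr0 subr0 oppr0.
have /eqP := psumr_eq0P terms_ge0 sum_eq0 (i := x) isT.
rewrite oppr_eq0 mulf_eq0 => /orP[/eqP // | /eqP Mxy].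
by move: xy; rewrite -M_offdiag_lt0 // Mxy ltxx.
Qed.

Hypothesis i_neq_j : i != j.

Lemma gap_source_gt0 : 0 < gap i.
Proof.
rewrite lt_neqAle gap_ge0 andbT eq_sym; apply/eqP => gi_eq0.
have : \sum_m gap m * M m i <= 0.
  apply: sumr_le0 => m _; have [-> |mi] := eqVneq m i; first by rewrite gi_eq0 mul0r.
  by apply: mulr_ge0_le0; [exact: gap_ge0 | exact: M_offdiag_le0].
rewrite gap_mul eqxx eq_sym (negPf i_neq_j) mulr0 subr0 mulr1.
by have := Zmx_invmx_diag_gt0 j; lra.
Qed.

Lemma gap_path_gt0 x p :
  0 < gap x -> path (adj W) x p -> j \notin p -> 0 < gap (last x p).
Proof.
elim: p x => [|y p IHp] x //= gx_gt0 /andP[xy p_adj].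
rewrite inE negb_or eq_sym => /andP[yj jp]; apply: IHp => //.
rewrite lt_neqAle gap_ge0 andbT eq_sym; apply/eqP => gy_eq0.
have yi : y != i by apply: contraTneq gap_source_gt0 => <-; rewrite gy_eq0 ltxx.
by move: gx_gt0; rewrite (gap_eq0_neighbour gy_eq0 yi yj xy) ltxx.
Qed.

Lemma gap_unreachable_eq0 k : ~~ connect avoid_j i k -> gap k = 0.
Proof.
move=> i_not_k; pose h m := if connect avoid_j i m then 0 else gap m.
suff /(_ k) : forall l, 0 <= - h l by rewrite /h (negPf i_not_k); have := gap_ge0 k; lra.
apply: Zmx_min_principle => l hl_gt0.
have i_not_l : ~~ connect avoid_j i l.
  by apply: contraTN hl_gt0 => i_l; rewrite /h i_l oppr0 ltxx.
have gl_gt0 : 0 < gap l by move: hl_gt0; rewrite /h (negPf i_not_l); lra.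
have jl : j != l by apply: contraTneq gl_gt0 => <-; rewrite gap_pivot ltxx.
have il : i != l by apply: contraNneq i_not_l => <-; exact: connect0.
have hM : \sum_m h m * M m l = \sum_m gap m * M m l.
  apply: eq_bigr => m _; rewrite /h; case: ifP => // i_m.
  have ml : m != l by apply: contraNneq i_not_l => <-.
  suff -> : M m l = 0 by rewrite !mulr0.
  apply/eqP; rewrite eq_le M_offdiag_le0 //= leNgt; apply/negP => Mml_lt0.
  move: i_not_l; rewrite (connect_trans i_m) //; apply: connect1 => /=.
  by rewrite -M_offdiag_lt0 // Mml_lt0 eq_sym jl.
under eq_bigr do rewrite mulNr.
by rewrite sumrN hM gap_mul (negPf il) (negPf jl) !mulr0 subr0 oppr0.
Qed.

Lemma every_path_visits_unreachable k :
  every_path_visits W i j k -> ~~ connect avoid_j i k.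
Proof.
move=> visits; apply/negP => /connectP [p p_avoid kE].
have p_adj : path (adj W) i p by apply: sub_path p_avoid => x y /andP[].
have avoid_notin x q : path avoid_j x q -> j \notin q.
  elim: q x => [|y q IHq] x //= /andP[/andP[_ yj] q_avoid].
  by rewrite inE negb_or eq_sym yj (IHq y q_avoid).
have := visits p p_adj (esym kE).
by rewrite inE eq_sym (negPf i_neq_j) (negPf (avoid_notin _ _ p_avoid)).
Qed.

End Gap.

Lemma Zmx_invmx_transitional : transitional_measure W S.
Proof.
move=> i j k; have gap_k := gap_ge0 i j k.
split; first by lra.
have [<-|i_neq_j] := eqVneq i j.
  by split=> [_ p _ _|_]; [exact: mem_head | exact: mulrC].
split=> [S_eq p p_adj pk | visits].
- apply/negPn/negP; rewrite inE negb_or eq_sym => /andP[_ jp].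
  have := gap_path_gt0 i_neq_j (gap_source_gt0 i_neq_j) p_adj jp.
  by rewrite pk; lra.
- have := gap_unreachable_eq0 (every_path_visits_unreachable i_neq_j visits).
  lra.
Qed.

End ZMatrix.

Lemma transitional_measure_card_le1 (R : realFieldType) (n : nat) (W S : 'M[R]_n) :
  (n <= 1)%N -> transitional_measure W S.
Proof.
move=> n_le1 i j k.
have ord0E (x : 'I_n) : val x = 0%N.
  by apply/eqP; rewrite -leqn0 -ltnS (leq_trans (ltn_ord x) n_le1).
have -> : j = i by apply: val_inj; rewrite !ord0E.
have -> : k = i by apply: val_inj; rewrite !ord0E.
by split=> //; split=> // _ p _ _; exact: mem_head.
Qed.

Lemma transitional_measure_mul_diag (R : realFieldType) (n : nat)
    (W S : 'M[R]_n) (r : 'rV[R]_n) :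
  (forall j, 0 < r 0 j) -> transitional_measure W S ->
  transitional_measure W (S *m diag_mx r).
Proof.
move=> r_gt0 S_trans i j k; rewrite mul_mx_diag !mxE.
have [S_le S_eq] := S_trans i j k.
have rr_gt0 : 0 < r 0 j * r 0 k by rewrite mulr_gt0.
have -> : S i j * r 0 j * (S j k * r 0 k) = S i j * S j k * (r 0 j * r 0 k) by ring.
have -> : S i k * r 0 k * (S j j * r 0 j) = S i k * S j j * (r 0 j * r 0 k) by ring.
rewrite ler_pM2r //; split=> //; rewrite -S_eq.
by split=> [/(mulIf (lt0r_neq0 rr_gt0)) | ->].
Qed.

Lemma K_PPR_modifPPR (R : realFieldType) (n : nat) (W : 'M[R]_n) (alpha : R) :
  degmx W \in unitmx -> degmx W - alpha *: W \in unitmx ->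
  K_PPR W alpha = K_modifPPR W alpha *m degmx W.
Proof.
rewrite /K_PPR /K_modifPPR; set D := degmx W; set N := D - alpha *: W.
move=> D_unit N_unit.
have -> : 1%:M - alpha *: (invmx D *m W) = invmx D *m N.
  by rewrite mulmxBr mulVmx // -scalemxAr.
have X_unit : invmx D *m N \in unitmx by rewrite unitmx_mul unitmx_inv D_unit.
have XY : (invmx D *m N) *m (invmx N *m D) = 1%:M.
  by rewrite -mulmxA mulKVmx // mulVmx.
by rewrite -[LHS]mulmx1 -XY mulKmx.
Qed.

Section Kernels.
Variables (R : realFieldType) (n : nat) (W : 'M[R]_n).
Hypothesis W_graph : weighted_graph W.

Let d i := \sum_j W i j.

Section DiagSub.
Variables (c : 'I_n -> R) (beta : R).
Hypothesis beta_gt0 : 0 < beta.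
Hypothesis c_dominant : forall l, beta * d l < c l.

Let N := diag_mx (\row_i c i) - beta *: W.

Lemma diag_sub_offdiag m l : m != l -> N m l = - (beta * W m l).
Proof. by move=> ml; rewrite !mxE (negPf ml) mulr0n sub0r. Qed.

Lemma diag_sub_offdiag_le0 m l : m != l -> N m l <= 0.
Proof.
case: W_graph => _ [W_ge0 _] ml.
by rewrite diag_sub_offdiag // oppr_le0 mulr_ge0 // ltW.
Qed.

Lemma diag_sub_colsum_gt0 l : 0 < \sum_m N m l.
Proof.
case: W_graph => W_sym _.
have diag_colsum : \sum_m (c m *+ (m == l)) = c l.
  by rewrite (bigD1 l) //= eqxx mulr1n big1 ?addr0 // => m /negPf->.
under eq_bigr do rewrite !mxE.
rewrite sumrB diag_colsum -mulr_sumr.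
under eq_bigr do rewrite W_sym.
by have := c_dominant l; rewrite subr_gt0.
Qed.

Lemma diag_sub_offdiag_lt0 m l : m != l -> (N m l < 0) = adj W m l.
Proof. by move=> ml; rewrite diag_sub_offdiag // oppr_lt0 pmulr_rgt0. Qed.

Lemma diag_sub_unitmx : N \in unitmx.
Proof. exact: Zmx_unitmx diag_sub_offdiag_le0 diag_sub_colsum_gt0. Qed.

Lemma diag_sub_transitional : transitional_measure W (invmx N).
Proof.
exact: (Zmx_invmx_transitional diag_sub_offdiag_le0 diag_sub_colsum_gt0
  diag_sub_offdiag_lt0).
Qed.

End DiagSub.

Lemma degree_gt0 : connected_graph W -> (1 < n)%N -> forall l, 0 < d l.
Proof.
case: W_graph => _ [W_ge0 _] W_conn n_gt1 l.
have [z z_neq_l] : exists z : 'I_n, z != l.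
  pose x0 := Ordinal (ltnW n_gt1); pose x1 := Ordinal n_gt1.
  by have [<-|] := eqVneq x0 l; [exists x1 | exists x0].
have /connectP [[|y p] /=] := W_conn l z; first by move=> _ zl; rewrite zl eqxx in z_neq_l.
case/andP => ly _ _; rewrite /d (bigD1 y) //=.
by apply: ltr_pwDl ly _; apply: sumr_ge0.
Qed.

Lemma transitional_K_absorp (t : R) (a : 'I_n -> R) :
  0 < t -> (forall i, 0 < a i) -> transitional_measure W (K_absorp W a t).
Proof.
move=> t_gt0 a_gt0; rewrite /K_absorp.
have -> : t *: diag_mx (\row_i a i) + laplacian W
          = diag_mx (\row_i (t * a i + d i)) - 1 *: W.
  apply/matrixP => m l; rewrite /laplacian /degmx /d !mxE.
  by case: (m == l); rewrite ?mulr1n ?mulr0n; ring.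
by apply: diag_sub_transitional => // l; rewrite mul1r ltrDr mulr_gt0.
Qed.

Section PageRank.
Hypothesis W_connected : connected_graph W.
Variable alpha : R.
Hypothesis alpha_gt0 : 0 < alpha.
Hypothesis alpha_lt1 : alpha < 1.

Lemma degree_dominant : (1 < n)%N -> forall l, alpha * d l < d l.
Proof. by move=> n_gt1 l; rewrite gtr_pMl // degree_gt0. Qed.

Lemma transitional_K_modifPPR : transitional_measure W (K_modifPPR W alpha).
Proof.
have [|n_gt1] := leqP n 1; first exact: transitional_measure_card_le1.
exact: diag_sub_transitional alpha_gt0 (degree_dominant n_gt1).
Qed.

Lemma transitional_K_PPR : transitional_measure W (K_PPR W alpha).
Proof.
have [|n_gt1] := leqP n 1; first exact: transitional_measure_card_le1.
have d_gt0 := degree_gt0 W_connected n_gt1.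
have D_unit : degmx W \in unitmx.
  rewrite unitmxE unitfE det_diag lt0r_neq0 //.
  by apply: prodr_gt0 => l _; rewrite mxE; exact: d_gt0.
rewrite K_PPR_modifPPR //; last exact: diag_sub_unitmx alpha_gt0 (degree_dominant n_gt1).
apply: transitional_measure_mul_diag transitional_K_modifPPR.
by move=> l; rewrite mxE; exact: d_gt0.
Qed.

End PageRank.
End Kernels.

Theorem proposition1 (R : realFieldType) (n : nat) (W : 'M[R]_n) :
  weighted_graph W -> connected_graph W ->
  (forall (t : R) (a : 'I_n -> R), 0 < t -> (forall i, 0 < a i) ->
     transitional_measure W (K_absorp W a t)) /\
  (forall alpha : R, 0 < alpha < 1 -> transitional_measure W (K_PPR W alpha)) /\
  (forall alpha : R, 0 < alpha < 1 -> transitional_measure W (K_modifPPR W alpha)).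
Proof.
move=> W_graph W_connected; split; [|split].
- exact: transitional_K_absorp.
- by move=> alpha /andP[alpha_gt0 alpha_lt1]; exact: transitional_K_PPR.
- by move=> alpha /andP[alpha_gt0 alpha_lt1]; exact: transitional_K_modifPPR.
Qed.
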